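(* Let $1\leq k\leq n$ and let $\Lambda_1,\dots,\Lambda_d\subset\mathbb{P}^n$ be $(k-1)$-dimensional linear subspaces satisfying $\mathrm{SP}(n-k)$. Let $2\leq r\leq d-1$ be an integer such that $\Lambda_{r+1},\dots,\Lambda_d$ do not satisfy $\mathrm{SP}(n-k)$. Then $$\dim\big(\mathrm{Span}(\Lambda_1,\dots,\Lambda_r)\cap\mathrm{Span}(\Lambda_{r+1},\dots,\Lambda_d)\big)\geq k-1.$$
   Context: $(k-1)$-dimensional linear subspaces $\Lambda_1,\dots,\Lambda_e\subset\mathbb{P}^n$ (not necessarily distinct) satisfy $\mathrm{SP}(n-k)$ if for every $j\in\{1,\dots,e\}$ and every $(n-k)$-dimensional linear subspace $L\subset\mathbb{P}^n$ meeting each $\Lambda_i$ with $i\neq j$, $L$ also meets $\Lambda_j$. (In particular a single subspace, $e=1$, does not satisfy this condition, since the empty intersection condition is met by an $(n-k)$-plane disjoint from it.) *)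

From HB Require Import structures.
From mathcomp Require Import all_boot all_order all_algebra.
Set Implicit Arguments. Unset Strict Implicit. Unset Printing Implicit Defensive.
Import GRing.Theory.
Local Open Scope ring_scope.

(* Projective space P^n over K is modelled by K^(n+1) (row vectors of width
   n.+1).  A projective linear subspace of dimension m is the row space of a
   square matrix of rank m+1.  Projective subspaces meet iff the
   corresponding vector subspaces have nonzero intersection. *)

Definition meets (K : fieldType) (n : nat) (A B : 'M[K]_(n.+1)) : bool :=
  (0 < \rank (A :&: B)%MS)%N.

Definition SP (K : fieldType) (n m e : nat) (Lam : 'I_e -> 'M[K]_(n.+1)) : Prop :=
  forall (j : 'I_e) (L : 'M[K]_(n.+1)),
    \rank L = m.+1 ->
    (forall i : 'I_e, i != j -> meets L (Lam i)) ->
    meets L (Lam j).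

From HB Require Import structures.
From mathcomp Require Import all_boot all_order all_algebra.
From mathcomp Require Import zify.
From Stdlib Require Import Classical.

(* Write A and B for the spans of the head Lam_0..Lam_(r-1) and of the tail
   Lam_r..Lam_(d-1), all dimensions being vector dimensions, and assume
   rank (A :&: B) < k.  Failure of SP(n-k) for the tail gives a subspace L of
   rank n-k+1 meeting every tail member except Lam_j.  Any T of the same rank
   containing L :&: B meets those tail members too, and if
   rank A < rank (A :&: T) + k it also meets each head member inside A; then
   SP(n-k) for the whole family forces T to meet Lam_j.  For T = L this is a
   contradiction unless rank (A :&: L) + k <= rank A.  In that case
   A :&: L + A :&: B is a proper subspace of A, so some v in A avoids it.
   The space L + v meets Lam_j in exactly a line, and by the modular law this
   line avoids A :&: L + v + L :&: B; a hyperplane T of L + v through the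
   latter and missing the line has rank (A :&: T) > rank (A :&: L), yet does
   not meet Lam_j. *)

Set Implicit Arguments. Unset Strict Implicit. Unset Printing Implicit Defensive.
Import GRing.Theory.
Local Open Scope ring_scope.

Section RowSpaces.
Variables (F : fieldType) (n : nat).

Lemma capmx_row_eq0 m (v : 'rV[F]_n) (X : 'M_(m, n)) :
  ~~ (v <= X)%MS -> (v :&: X)%MS = 0.
Proof.
move=> vX; apply/eqP; rewrite -mxrank_eq0 -leqn0 -ltnS.
apply: leq_trans (rank_leq_row v).
by rewrite (ltn_leqif (mxrank_leqif_sup (capmxSl v X))) sub_capmx submx_refl.
Qed.

Lemma mxrank_adds_row m (X : 'M[F]_(m, n)) (v : 'rV_n) :
  ~~ (v <= X)%MS -> \rank (X + v)%MS = (\rank X).+1.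
Proof.
move=> vX; rewrite mxrank_disjoint_sum ?rank_rV; last first.
  by rewrite capmxC capmx_row_eq0.
by case: eqP vX => [->|]; rewrite ?sub0mx ?addn1.
Qed.

Lemma exists_compl_containing m1 m2 m3 (Z : 'M[F]_(m1, n)) (W : 'M_(m2, n))
    (M : 'M_(m3, n)) :
  (Z <= M)%MS -> (W <= M)%MS -> (Z :&: W)%MS = 0 ->
  exists T : 'M_n, [/\ (Z <= T)%MS, (T <= M)%MS, (T :&: W)%MS = 0
                     & (\rank T + \rank W)%N = \rank M].
Proof.
move=> ZM WM ZW0; pose C := (M :\: (Z + W))%MS.
have ZWM : (Z + W <= M)%MS by rewrite addsmx_sub ZM WM.
have CZW0 : (C :&: (Z + W))%MS = 0 by apply: capmx_diff.
have CZ0 : (Z :&: C)%MS = 0.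
  by apply/eqP; rewrite -submx0 -CZW0 capmxC capmxS ?addsmxSl.
have rM : \rank M = (\rank C + (\rank Z + \rank W))%N.
  rewrite -(mxrank_cap_compl M (Z + W)%MS) (capmx_idPr ZWM).
  by rewrite mxrank_disjoint_sum // addnC.
have rT : (\rank (Z + C)%MS + \rank W)%N = \rank M.
  by rewrite mxrank_disjoint_sum // rM; lia.
exists (Z + C)%MS; split => //; first exact: addsmxSl.
  by rewrite addsmx_sub ZM diffmxSl.
apply/eqP; rewrite -mxrank_eq0; have := mxrank_sum_cap (Z + C)%MS W.
rewrite rT -addsmxA [(C + W)%MS]addsmxC addsmxA.
by rewrite -(addsmxC C) !mxrank_disjoint_sum // rM; lia.
Qed.

Lemma mxrank_cap_adds_row m1 m2 (L : 'M[F]_(m1, n)) (C : 'M_(m2, n)) (v : 'rV_n) :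
  (L :&: C)%MS = 0 -> (\rank ((L + v) :&: C) <= 1)%N.
Proof.
move=> LC0; have WL0 : ((L + v) :&: C :&: L)%MS = 0.
  by apply/eqP; rewrite -submx0 -LC0 capmxC capmxA capmxS ?capmxSl.
have : (\rank ((L + v) :&: C + L)%MS <= \rank (L + v)%MS)%N.
  by rewrite mxrankS // addsmx_sub capmxSl addsmxSl.
have [+ _] := mxrank_adds_leqif L v; have := rank_leq_row v.
by rewrite (mxrank_disjoint_sum WL0); lia.
Qed.

(* Two applications of the modular law; [v] is independent of
   [A :&: L + A :&: B], so it contributes nothing inside [B]. *)
Lemma capmx_adds_row_sub m1 m2 m3 (A : 'M[F]_(m1, n)) (B : 'M_(m2, n))
    (L : 'M_(m3, n)) (v : 'rV_n) :
  (v <= A)%MS -> ~~ (v <= (A :&: L) + (A :&: B))%MS ->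
  ((A :&: L + v + L :&: B) :&: B <= L)%MS.
Proof.
move=> vA vX; set X := (A :&: L + A :&: B)%MS; set P := (A :&: L + v)%MS.
have ALX : (A :&: L <= X)%MS by apply: addsmxSl.
have PBX : (P :&: B <= P :&: X)%MS.
  rewrite sub_capmx capmxSl (submx_trans _ (addsmxSr _ _)) // capmxS //.
  by rewrite addsmx_sub capmxSl vA.
rewrite addsmxC -(matrix_modl P (capmxSr L B)) addsmx_sub capmxSl.
apply: submx_trans PBX _; rewrite -(matrix_modl v ALX) capmx_row_eq0 //.
by rewrite addsmx0_id capmxSr.
Qed.

End RowSpaces.

Section Meets.
Variables (K : fieldType) (n : nat).
Implicit Types (A B L Lj S T U Lam M : 'M[K]_n.+1).

Lemma meetsSl S T Lam : (S <= T)%MS -> meets S Lam -> meets T Lam.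
Proof. by rewrite /meets => ST /leq_trans; apply; apply/mxrankS/capmxS. Qed.

Lemma meets_capr L B Lam : (Lam <= B)%MS -> meets L Lam -> meets (L :&: B)%MS Lam.
Proof.
rewrite /meets => LamB /leq_trans; apply; apply/mxrankS.
by rewrite sub_capmx capmxSr andbT capmxS.
Qed.

Lemma meets_of_rank M U Lam :
  (U <= M)%MS -> (Lam <= M)%MS -> (\rank M < \rank U + \rank Lam)%N ->
  meets U Lam.
Proof.
move=> UM LamM; rewrite /meets -mxrank_sum_cap.
have : (\rank (U + Lam)%MS <= \rank M)%N by rewrite mxrankS // addsmx_sub UM LamM.
lia.
Qed.

Lemma meetsE A B : meets A B = ((A :&: B)%MS != 0).
Proof. by rewrite /meets lt0n mxrank_eq0. Qed.

Lemma exists_plane_avoiding A B L Lj (v : 'rV_n.+1) :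
  (Lj <= B)%MS -> ~~ meets L Lj -> (v <= A)%MS ->
  ~~ (v <= (A :&: L) + (A :&: B))%MS -> meets (L + v)%MS Lj ->
  exists T, [/\ \rank T = \rank L, ((A :&: L) + v <= T)%MS,
                (L :&: B <= T)%MS & ~~ meets T Lj].
Proof.
rewrite meetsE negbK => LjB /eqP LLj0 vA vX mLv.
set Z := (A :&: L + v + L :&: B)%MS; set W := ((L + v) :&: Lj)%MS.
have vL : ~~ (v <= L)%MS.
  by apply: contra vX => vL; rewrite (submx_trans _ (addsmxSl _ _)) // sub_capmx vA.
have ZW0 : (Z :&: W)%MS = 0.
  apply/eqP; rewrite -submx0 -LLj0 sub_capmx.
  rewrite (submx_trans _ (capmx_adds_row_sub vA vX)) ?capmxS //=.
    exact: submx_trans (capmxSr _ _) (capmxSr _ _).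
  exact: submx_trans (capmxSr _ _) LjB.
have ZLv : (Z <= L + v)%MS.
  have LLv : (L <= L + v)%MS by apply: addsmxSl.
  rewrite !addsmx_sub addsmxSr (submx_trans (capmxSr _ _)) //.
  exact: submx_trans (capmxSl _ _) LLv.
have [T [ZT TLv TW0 rTW]] := exists_compl_containing ZLv (capmxSl _ _) ZW0.
have rW : \rank W = 1%N.
  have := mxrank_cap_adds_row v LLj0.
  by move: mLv; rewrite /meets -/W; lia.
exists T; split.
- by move: rTW; rewrite rW mxrank_adds_row // addn1 => -[].
- exact: submx_trans (addsmxSl _ _) ZT.
- exact: submx_trans (addsmxSr _ _) ZT.
- rewrite meetsE negbK -submx0 -TW0 sub_capmx capmxSl /=.
  by rewrite sub_capmx capmxSr andbT (submx_trans (capmxSl _ _)).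
Qed.

Lemma SP_meets (F : nat -> 'M[K]_n.+1) m d j T :
  SP m (fun i : 'I_d => F i) -> (j < d)%N -> \rank T = m.+1 ->
  (forall i, (i < d)%N -> i != j -> meets T (F i)) -> meets T (F j).
Proof.
move=> spF jd rT mT; apply: (spF (Ordinal jd) T rT) => i ij.
by apply: mT => //; rewrite -(inj_eq val_inj) in ij.
Qed.

Lemma not_SP_shift (F : nat -> 'M[K]_n.+1) m r d :
  ~ SP m (fun i : 'I_(d - r) => F (r + i)%N) ->
  exists j L, [/\ (r <= j < d)%N, \rank L = m.+1,
                  forall i, (r <= i < d)%N -> i != j -> meets L (F i)
                & ~~ meets L (F j)].
Proof.
move=> nspF; apply: NNPP => noL; apply: nspF => j L rL mL.
apply/negPn/negP => nmL; apply: noL; exists (r + j)%N, L; split => //.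
  by rewrite leq_addr /=; have := ltn_ord j; lia.
move=> i /andP[ri id] ij; have ird : (i - r < d - r)%N by lia.
have := mL (Ordinal ird); rewrite /= subnKC //; apply.
by apply: contraNneq ij => <-; rewrite /= subnKC.
Qed.

End Meets.

Section SplitFamily.
Variables (K : fieldType) (n k d r : nat) (Lam : nat -> 'M[K]_n.+1).
Hypothesis rkLam : forall i, (i < d)%N -> \rank (Lam i) = k.
Hypothesis spLam : SP (n - k) (fun i : 'I_d => Lam i).

Local Notation A := (\sum_(i < r) Lam i)%MS.
Local Notation B := (\sum_(i < d - r) Lam (r + i)%N)%MS.

Lemma Lam_sub_head i : (i < r)%N -> (Lam i <= A)%MS.
Proof. by move=> ir; apply: (sumsmx_sup (Ordinal ir)). Qed.

Lemma Lam_sub_tail i : (r <= i < d)%N -> (Lam i <= B)%MS.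
Proof.
move=> /andP[ri id]; have ird : (i - r < d - r)%N by lia.
by apply: (sumsmx_sup (Ordinal ird)); rewrite //= subnKC.
Qed.

Variables (j : nat) (L : 'M[K]_n.+1).
Hypotheses (rj : (r <= j)%N) (jd : (j < d)%N) (rL : \rank L = (n - k).+1).
Hypothesis mL : forall i, (r <= i < d)%N -> i != j -> meets L (Lam i).

Lemma meets_Lam_j T :
  \rank T = (n - k).+1 -> (\rank A < \rank (A :&: T) + k)%N ->
  (L :&: B <= T)%MS -> meets T (Lam j).
Proof.
move=> rT rAT LBT; apply: (SP_meets spLam jd rT) => i id ij.
have [ir | ri] := ltnP i r.
  apply: meetsSl (capmxSr A T) _.
  by apply: meets_of_rank (capmxSl A T) (Lam_sub_head ir) _; rewrite rkLam.
apply: meetsSl LBT _; apply: meets_capr (Lam_sub_tail _) _; rewrite ?ri //.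
by apply: mL; rewrite ?ri.
Qed.

Hypothesis kn : (k <= n)%N.

Lemma meets_Lam_j_of_rank_cap : (\rank (A :&: B) < k)%N -> meets L (Lam j).
Proof.
move=> rAB; apply/negPn/negP => nmL.
have rAL : (\rank A + \rank L <= \rank (A :&: L) + n.+1)%N.
  by rewrite -mxrank_sum_cap addnC leq_add2l rank_leq_col.
have [rA | rA] := ltnP (\rank A) (\rank (A :&: L) + k).
  by case/negP: nmL; apply: meets_Lam_j; rewrite ?capmxSl.
have /row_subPn[i0 vX] : ~~ (A <= (A :&: L) + (A :&: B))%MS.
  apply: contraTN rA => /mxrankS; rewrite -ltnNge.
  have [+ _] := mxrank_adds_leqif (A :&: L)%MS (A :&: B)%MS; lia.
set v := row i0 A.
have vAL : ~~ (v <= A :&: L)%MS.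
  by apply: contra vX => /submx_trans; apply; apply: addsmxSl.
have vL : ~~ (v <= L)%MS by apply: contra vAL => vL; rewrite sub_capmx row_sub.
have mLv : meets (L + v)%MS (Lam j).
  apply: (meets_of_rank (submx1 _) (submx1 _)).
  by rewrite mxrank1 mxrank_adds_row // rL rkLam //; lia.
have LjB : (Lam j <= B)%MS by rewrite Lam_sub_tail ?rj.
have [T [rT ALvT LBT nmT]] := exists_plane_avoiding LjB nmL (row_sub i0 A) vX mLv.
case/negP: nmT; apply: meets_Lam_j; rewrite ?rT //.
have : (\rank ((A :&: L) + v)%MS <= \rank (A :&: T))%N.
  by rewrite mxrankS // sub_capmx ALvT addsmx_sub capmxSl row_sub.
by rewrite mxrank_adds_row //; lia.
Qed.

End SplitFamily.

Theorem lemma2p11 (K : closedFieldType) (n k d r : nat)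
    (Lam : nat -> 'M[K]_(n.+1)) :
  (1 <= k <= n)%N ->
  (forall i, (i < d)%N -> \rank (Lam i) = k) ->
  SP (n - k) (fun i : 'I_d => Lam (nat_of_ord i)) ->
  (2 <= r <= d.-1)%N ->
  ~ SP (n - k) (fun i : 'I_(d - r) => Lam (r + nat_of_ord i)%N) ->
  (k <= \rank ((\sum_(i < r) Lam i) :&: (\sum_(i < d - r) Lam (r + i)%N))%MS)%N.
Proof.
move=> /andP[_ kn] rkLam spLam _.
case/not_SP_shift => j [L [/andP[rj jd] rL mL nmL]].
rewrite leqNgt; apply: contra nmL.
exact: meets_Lam_j_of_rank_cap.
Qed.
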